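(* In the hardware model described in the context, and for a program obeying the well-behavedness rules below, suppose a thread $T_i$ tags a node $n$ at time $t_t$ while $n$ is reachable in its data structure. If some thread $T_j$ frees $n$ at a time $t_f$ with $t_t < t_f$, then any conditional access to $n$ by $T_i$ at a time $t_d > t_f$ (with no re-tagging of $n$ by $T_i$ in between) fails. In particular, a conditional access never succeeds on a node that has been freed since it was tagged.
   Context: Model: threads operate on a shared memory organized into nodes, with a cache-coherence mechanism (e.g. MSI/MESI). Each thread maintains a set of tagged locations. Conditional-access instructions cread (read) and cwrite (write) satisfy: (P1) a conditional access atomically tags the accessed node on its first access by the thread and then conditionally performs the read/write; (P2) a conditional access succeeds only if none of the thread's tagged locations has been invalidated since it was tagged (on failure all tags are removed and the operation restarts); (P3) when a location is written, all cached copies at other threads are invalidated, thereby invalidating any tags on it held by other threads; (P4) conditional accesses may fail spuriously but never succeed spuriously. Well-behavedness: all shared-memory reads and writes of data-structure operations use cread/cwrite; reclaimer rule: a thread frees a node only after unlinking it and then writing to (marking) it; only one thread may free a given node.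
   Formalization: The thread $T_j$ that frees n is distinct from $T_i$, and no re-tagging of n by $T_i$ occurs at any time in $(t_t, t_d]$, the access at $t_d$ included. Each condition added here is assumed in the paper as well or is needed for the statement above to hold. *)

From mathcomp Require Import all_boot.
Set Implicit Arguments. Unset Strict Implicit. Unset Printing Implicit Defensive.

Section Model.
Variables (Thread Node : eqType).

(* Hardware tag state: [tagged t n] = thread t currently holds a tag on n;
   [invalid t n] = that tag has been invalidated since it was placed. *)
Record hwstate := HwState {
  tagged  : Thread -> Node -> bool;
  invalid : Thread -> Node -> bool }.

Inductive access_kind := CRead | CWrite.

(* Well-behavedness requires that every
   shared-memory read/write of data-structure operations is a conditional
   access, so there are no plain memory accesses among the events. *)
Inductive event :=
  | Acc   of Thread & access_kind & Node & bool  (* cread/cwrite; bool = succeeded *)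
  | Free  of Thread & Node
  | Evict of Thread & Node                       (* spurious invalidation (e.g. eviction) *)
  | Local of Thread.

Definition acc_step (s s' : hwstate) (i : Thread) (k : access_kind) (n : Node)
    (ok : bool) : Prop :=
  let first := ~~ tagged s i n in
  (* (P1) atomically tag the node on its first access (fresh tag: not invalidated) *)
  let tg1 := fun i' m => tagged s i' m || ((i' == i) && (m == n)) in
  let iv1 := fun i' m => invalid s i' m && ~~ [&& first, i' == i & m == n] in
  (* (P2) the access may succeed only if no tagged location was invalidated *)
  let valid := forall m, tg1 i m -> ~~ iv1 i m in
  if ok then
    valid /\ tagged s' = tg1 /\
    (* (P3) a write invalidates the copies (hence tags) held by other threads *)
    invalid s' = (fun i' m => iv1 i' m ||
        [&& (if k is CWrite then true else false), m == n, i' != i & tg1 i' m])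
  else
    (* failure (possibly spurious, P4): all tags of [i] are removed *)
    tagged s' = (fun i' m => tg1 i' m && (i' != i)) /\
    invalid s' = (fun i' m => iv1 i' m && (i' != i)).

Definition step (s : hwstate) (e : event) (s' : hwstate) : Prop :=
  match e with
  | Acc i k n ok => acc_step s s' i k n ok
  | Evict i n => tagged s' = tagged s /\
      invalid s' = (fun i' m => invalid s i' m || ((i' == i) && (m == n)))
  | Free _ _ | Local _ => s' = s
  end.

(* An execution: states before each time step, the event performed at each
   time step, and the (program-level, abstract) reachability of nodes in the
   data structure at each time. *)
Record execution := Execution {
  st    : nat -> hwstate;
  ev    : nat -> event;
  reach : nat -> Node -> Prop;
  steps : forall t, step (st t) (ev t) (st t.+1) }.

Definition tags_at (X : execution) (t : nat) (i : Thread) (n : Node) : Prop :=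
  exists k ok, ev X t = Acc i k n ok /\ ~~ tagged (st X t) i n.

(* Reclaimer rule: a thread frees a node only after unlinking it (from then on
   it is unreachable) and then writing to (marking) it; only one thread
   (indeed, one free event) frees a given node. *)
Definition well_behaved (X : execution) : Prop :=
  (forall tf j n, ev X tf = Free j n ->
     exists tu tw, [/\ tu < tw, tw < tf,
       (forall t, tu <= t <= tf -> ~ reach X t n) &
       ev X tw = Acc j CWrite n true]) /\
  (forall t t' j j' n, ev X t = Free j n -> ev X t' = Free j' n -> t = t').

End Model.

(* By the reclaimer rule T_j unlinked n strictly after t_t (n was
   still reachable then) and later performed a successful cwrite on n at some
   t_w with t_t < t_w < t_f. *)
From Pilot Require Import Defs.
From mathcomp Require Import all_boot zify.
Set Implicit Arguments. Unset Strict Implicit. Unset Printing Implicit Defensive.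

Local Notation tagged := Pilot.Defs.tagged.

Section SingleStep.
Variables (Thread Node : eqType).
Implicit Types (s : hwstate Thread Node) (e : event Thread Node)
  (i j : Thread) (n : Node).

Lemma tag_appears_by_access s e (s' : hwstate Thread Node) i n :
  step s e s' -> ~~ tagged s i n -> tagged s' i n ->
  exists k ok, e = Acc i k n ok.
Proof.
case: e => [i' k m ok|i' m|i' m|i'] /=.
- rewrite /acc_step; case: ok => [[_ [-> _]]|[-> _]] /= /negbTE ->.
  + by case/andP=> /eqP <- /eqP <-; exists k, true.
  + by case/andP=> /andP [/eqP <- /eqP <-] _; exists k, false.
- by move=> -> /negbTE ->.
- by move=> [-> _] /negbTE ->.
- by move=> -> /negbTE ->.
Qed.

Lemma invalid_step s e (s' : hwstate Thread Node) i n :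
  step s e s' -> tagged s i n -> tagged s' i n ->
  invalid s i n -> invalid s' i n.
Proof.
move=> Hstep Ht Ht' Hi.
(* A held tag is never the fresh tag of a first access, so no conjunct of
   the model's "fresh tag" reset applies to it. *)
have keep : forall i' m, ~~ [&& ~~ tagged s i' m, i == i' & n == m].
  move=> i' m; apply/negP => /and3P [Hn /eqP Ei /eqP En].
  by rewrite -Ei -En Ht in Hn.
case: e Hstep => [i' k m ok|i' m|i' m|i'] /=.
- rewrite /acc_step; case: ok => [[_ [_ ->]]|[Htg ->]] /=.
  + by rewrite Hi keep.
  + by move: Ht'; rewrite Htg /= Hi keep => /andP [_ ->].
- by move=> ->.
- by move=> [_ ->] /=; rewrite Hi.
- by move=> ->.
Qed.

Lemma cwrite_invalidates s (s' : hwstate Thread Node) i j n :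
  acc_step s s' j CWrite n true -> i != j -> tagged s i n -> invalid s' i n.
Proof. by rewrite /acc_step => [[_ [_ ->]]] Hne Ht /=; rewrite eqxx Hne Ht orbT. Qed.

Lemma invalid_access_fails s (s' : hwstate Thread Node) i k n :
  tagged s i n -> invalid s i n -> ~ acc_step s s' i k n true.
Proof. by move=> Ht Hi [valid _]; move: (valid n); rewrite Ht Hi /= => /(_ isT). Qed.

End SingleStep.

Section Executions.
Variables (Thread Node : eqType) (X : execution Thread Node).
Implicit Types (i : Thread) (n : Node).

Lemma tag_held_backward i n a b :
  tagged (st X b) i n -> (forall t, a <= t < b -> ~ tags_at X t i n) ->
  forall t, a <= t <= b -> tagged (st X t) i n.
Proof.
elim: b => [|b IH] Hb Hno t /andP [Hat Htb].
  by move: Htb; rewrite leqn0 => /eqP ->.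
case: (ltngtP t b.+1) Htb => // [Htb _|-> //].
have Hab : a <= b by apply: leq_trans Hat _.
have Htagb : tagged (st X b) i n.
  apply/negPn/negP => Hn.
  have [k [ok Hev]] := tag_appears_by_access (steps X b) Hn Hb.
  by apply: (Hno b); [rewrite Hab ltnSn | exists k, ok].
apply: IH => //; last by rewrite Hat.
by move=> t' /andP [Ha' Hb']; apply: Hno; rewrite Ha' ltnS ltnW.
Qed.

Lemma invalid_held_forward i n a b :
  a <= b -> (forall t, a <= t <= b -> tagged (st X t) i n) ->
  invalid (st X a) i n -> invalid (st X b) i n.
Proof.
elim: b => [|b IH] Hab Htag Ha; first by move: Hab; rewrite leqn0 => /eqP <-.
case: (ltngtP a b.+1) Hab => // [Hab _|<- //].
have Htag' : forall t, a <= t <= b -> tagged (st X t) i n.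
  by move=> t /andP [Ht Htb]; apply: Htag; rewrite Ht ltnW.
apply: (invalid_step (steps X b)).
- by apply: Htag'; rewrite leqnn andbT -ltnS.
- by apply: Htag; rewrite leqnn andbT ltnW.
- exact: IH.
Qed.

Lemma freer_writes_after i n t_t t_f :
  well_behaved X -> reach X t_t n -> ev X t_f = Free i n -> t_t < t_f ->
  exists t_w, [/\ t_t < t_w, t_w < t_f & ev X t_w = Acc i CWrite n true].
Proof.
move=> [Hrecl _] Hreach Hfree Htf.
have [tu [tw [Huw Hwf Hunreach Hw]]] := Hrecl _ _ _ Hfree.
have Htu : t_t < tu.
  rewrite ltnNge; apply/negP => Hle.
  by apply: (Hunreach t_t) => //; rewrite Hle ltnW.
by exists tw; split => //; apply: ltn_trans Huw.
Qed.

End Executions.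

Theorem theorem1 (Thread Node : eqType) (X : execution Thread Node)
  (Hwb : well_behaved X) (Ti Tj : Thread) (n : Node) (t_t t_f t_d : nat)
  (k : access_kind) (ok : bool) :
  tags_at X t_t Ti n ->
  reach X t_t n ->
  ev X t_f = Free Tj n ->
  Ti != Tj ->
  t_t < t_f ->
  t_f < t_d ->
  (forall t, t_t < t <= t_d -> ~ tags_at X t Ti n) ->
  ev X t_d = Acc Ti k n ok ->
  ok = false.
Proof.
move=> _ Hreach Hfree Hne Htf Hfd Hno Hd.
have Htd : t_t < t_d by apply: ltn_trans Hfd.
(* The access at t_d is not a tagging one, so the tag is already held. *)
have Htag_d : tagged (st X t_d) Ti n.
  by apply/negPn/negP => Hn; apply: (Hno t_d); [rewrite Htd leqnn | exists k, ok].
have Hheld : forall t, t_t < t <= t_d -> tagged (st X t) Ti n.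
  apply: tag_held_backward Htag_d _ => t /andP [Ht Htb].
  by apply: Hno; rewrite Ht ltnW.
have [t_w [Htw Hwf Hw]] := freer_writes_after Hwb Hreach Hfree Htf.
have Hinv_w : invalid (st X t_w.+1) Ti n.
  have := steps X t_w; rewrite Hw => Hstep.
  by apply: (cwrite_invalidates Hstep Hne); apply: Hheld; lia.
have Hinv_d : invalid (st X t_d) Ti n.
  by apply: (invalid_held_forward (a := t_w.+1)) => // [|t Ht]; [lia | apply: Hheld; lia].
case: ok Hd => // Hd.
by have := steps X t_d; rewrite Hd => /(invalid_access_fails Htag_d Hinv_d).
Qed.
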